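(* Let $\Gamma$ be a topological group, $A$ a regular CW-complex, and $\mathcal I$ a cellular $(\Gamma,A)$-groupoid. Then for any topological group $G$: (a) the restriction maps $\mathrm{res}_0\colon\mathrm{Rep}^G_{\mathrm{cell}}(\mathcal I)\to\mathrm{Rep}^G_{\mathrm{cell}}(\mathcal I^{(0)})$ and $\mathrm{res}_0\colon\overline{\mathrm{Rep}}^{\,G}_{\mathrm{cell}}(\mathcal I)\to\overline{\mathrm{Rep}}^{\,G}_{\mathrm{cell}}(\mathcal I^{(0)})$ are injective; (b) the restriction maps $\mathrm{res}_1\colon\mathrm{Rep}^G_{\mathrm{cell}}(\mathcal I)\to\mathrm{Rep}^G_{\mathrm{cell}}(\mathcal I^{(1)})$ and $\mathrm{res}_1\colon\overline{\mathrm{Rep}}^{\,G}_{\mathrm{cell}}(\mathcal I)\to\overline{\mathrm{Rep}}^{\,G}_{\mathrm{cell}}(\mathcal I^{(1)})$ are bijective.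
   Context: A CW-complex $A$ is regular if each cell $e$ has a characteristic map $\sigma_e\colon\mathbb D^{d(e)}\to A$ which is an embedding sending $\mathbb S^{d(e)-1}$ onto a subcomplex. For $a\in A$, $e(a)$ is the cell whose open cell contains $a$; $f\le e$ means $f$ is a face of $e$. A $(\Gamma,A)$-groupoid is a subspace $\mathcal I\subset\Gamma\times A$ with $\mathcal I\cap(\Gamma\times\{a\})=\tilde{\mathcal I}_a\times\{a\}$, $\tilde{\mathcal I}_a$ a closed subgroup (identified with $\mathcal I_a$). It is cellular if $\mathcal I_a=\mathcal I_b$ whenever $e(a)=e(b)$ (write $\mathcal I(e)$) and it is locally maximal (for each $a$ and neighbourhood $B$ of $a$ there is an open $U$, $a\in U\subset B$, and a homotopy $\rho_t\colon U\to U$ with $\rho_0=\mathrm{id}$, $\rho_1\equiv a$, $\mathcal I_u\subset\mathcal I_{\rho_t(u)}$); then $\mathcal I(e)\subset\mathcal I(f)$ for $f\le e$. $\mathcal I^{(k)}$ denotes the restriction of $\mathcal I$ over the $k$-skeleton $A^{(k)}$ (a cellular groupoid over $A^{(k)}$). A cellular representation of $\mathcal I$ in $G$ is a continuous map $\beta\colon\mathcal I\to G$, restricting to homomorphisms on each $\mathcal I_a$, with $\beta_a=\beta_b$ whenever $e(a)=e(b)$; equivalently a family $\beta_e\in\mathrm{Hom}(\mathcal I(e),G)$ with $\beta_e=\beta_f|_{\mathcal I(e)}$ for $f\le e$. Two are conjugate if $\beta'=g^{-1}\beta g$ for a single $g\in G$. $\mathrm{Rep}^G_{\mathrm{cell}}(\mathcal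 I)$ is the set of conjugacy classes of cellular representations. With $\overline{\mathrm{Hom}}(K,G)$ the set of $G$-conjugacy classes of continuous homomorphisms $K\to G$, $\overline{\mathrm{Rep}}^{\,G}_{\mathrm{cell}}(\mathcal I)$ is the set of families $(b_e)_e$ with $b_e\in\overline{\mathrm{Hom}}(\mathcal I(e),G)$ and $b_e=b_f|_{\mathcal I(e)}$ whenever $f\le e$. The same definitions apply to $\mathcal I^{(k)}$ over $A^{(k)}$, and $\mathrm{res}_k$ denotes restriction to cells of $A^{(k)}$. *)

From HB Require Import structures.
From mathcomp Require Import all_boot all_order all_algebra.
From mathcomp Require Import all_classical all_reals all_analysis.
From mathcomp Require Import Rstruct Rstruct_topology.

Set Implicit Arguments.
Unset Strict Implicit.
Unset Printing Implicit Defensive.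

Import Order.TTheory GRing.Theory Num.Theory.
Local Open Scope classical_set_scope.
Local Open Scope ring_scope.

Notation RR := Rdefinitions.R.

Record topGroup := TopGroup {
  tg_sort :> topologicalType;
  tg_mul : tg_sort -> tg_sort -> tg_sort;
  tg_inv : tg_sort -> tg_sort;
  tg_one : tg_sort;
  tg_mulA : forall x y z, tg_mul x (tg_mul y z) = tg_mul (tg_mul x y) z;
  tg_mul1 : forall x, tg_mul tg_one x = x;
  tg_mulV : forall x, tg_mul (tg_inv x) x = tg_one;
  tg_mul_cont : continuous (fun p : tg_sort * tg_sort => tg_mul p.1 p.2);
  tg_inv_cont : continuous tg_inv }.

Arguments tg_mul {_}. Arguments tg_inv {_}. Arguments tg_one {_}.

Definition closed_subgroup (Gm : topGroup) (H : set Gm) : Prop :=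
  [/\ H tg_one,
      (forall x y, H x -> H y -> H (tg_mul x y)),
      (forall x, H x -> H (tg_inv x)) & closed H].

(* Closed unit disk D^d, its boundary sphere S^(d-1) and the open disk in R^d
   (row vectors, Euclidean norm). *)
Definition sqnorm d (x : 'rV[RR]_d) : RR := \sum_(i < d) (x ord0 i) ^+ 2.
Definition disk d : set 'rV[RR]_d := [set x | sqnorm x <= 1].
Definition sphere d : set 'rV[RR]_d := [set x | sqnorm x = 1].
Definition odisk d : set 'rV[RR]_d := [set x | sqnorm x < 1].
Arguments disk : clear implicits.
Arguments sphere : clear implicits.
Arguments odisk : clear implicits.

Unset Implicit Arguments.
Section CW.
Context {A : topologicalType} {E : Type} {dim : E -> nat}
        (sig : forall e, 'rV[RR]_(dim e) -> A).

Definition ocell (e : E) : set A := sig e @` odisk (dim e).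
Definition ccell (e : E) : set A := sig e @` disk (dim e).

Definition is_CW : Prop :=
  [/\ hausdorff_space A,
      (forall a, exists e, ocell e a /\ forall e', ocell e' a -> e' = e),
      (* characteristic maps: continuous on the closed disk, and a
         homeomorphism of the open disk onto the open cell *)
      [/\ (forall e, {within disk (dim e), continuous (sig e)}),
          (forall e x y, odisk (dim e) x -> odisk (dim e) y ->
                         sig e x = sig e y -> x = y) &
          (forall e U, open U -> exists V, open V /\
             sig e @` (U `&` odisk (dim e)) = V `&` ocell e)],
      (forall e x, sphere (dim e) x ->
         exists f, (dim f < dim e)%N /\ ocell f (sig e x)) /\
      (forall e, finite_set [set f | (sig e @` sphere (dim e) `&` ocell f) !=set0])
    &
      (forall C : set A, closed C <->
         forall e, closed (disk (dim e) `&` sig e @^-1` C))].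

Definition subcomplex (S : set A) : Prop :=
  closed S /\ exists F : set E, S = \bigcup_(f in F) ocell f.

Definition is_regular_CW : Prop :=
  [/\ is_CW,
      (forall e x y, disk (dim e) x -> disk (dim e) y ->
                     sig e x = sig e y -> x = y),
      (forall e U, open U -> exists V, open V /\
         sig e @` (U `&` disk (dim e)) = V `&` ccell e)
    & (forall e, subcomplex (sig e @` sphere (dim e)))].

Definition face (f e : E) : Prop := ocell f `<=` closure (ocell e).

Context {Gam : topGroup}.

Definition fiber (I : set (Gam * A)) (a : A) : set Gam := [set g | I (g, a)].

Definition groupoid (I : set (Gam * A)) : Prop :=
  forall a, closed_subgroup (fiber I a).

Definition locally_maximal (I : set (Gam * A)) : Prop :=
  forall (a : A) (B : set A), nbhs a B ->
    exists U : set A, [/\ open U, U a, U `<=` B &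
      exists rho : RR -> A -> A,
        [/\ {within [set p : RR * A | 0 <= p.1 <= 1 /\ U p.2],
              continuous (fun p : RR * A => rho p.1 p.2)},
            (forall t u, 0 <= t <= 1 -> U u -> U (rho t u)),
            (forall u, U u -> rho 0 u = u),
            (forall u, U u -> rho 1 u = a) &
            (forall t u, 0 <= t <= 1 -> U u -> fiber I u `<=` fiber I (rho t u))]].

Definition cellular_groupoid (I : set (Gam * A)) : Prop :=
  [/\ groupoid I,
      (forall e a b, ocell e a -> ocell e b -> fiber I a = fiber I b)
    & locally_maximal I].

Definition Icell (I : set (Gam * A)) (e : E) : set Gam :=
  [set g | exists a, ocell e a /\ I (g, a)].

(* Representations in G.  A set of cells P (a skeleton) determines the
   restricted groupoid over the corresponding subcomplex. *)
Context {G : topGroup}.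

Definition cont_hom (H : set Gam) (phi : Gam -> G) : Prop :=
  (forall x y, H x -> H y -> phi (tg_mul x y) = tg_mul (phi x) (phi y)) /\
  {within H, continuous phi}.

Definition hom_conj (H : set Gam) (phi psi : Gam -> G) : Prop :=
  exists g : G, forall x, H x -> psi x = tg_mul (tg_mul (tg_inv g) (phi x)) g.

Definition cell_rep (I : set (Gam * A)) (P : E -> Prop) (beta : E -> Gam -> G)
  : Prop :=
  (forall e, P e -> cont_hom (Icell I e) (beta e)) /\
  (forall f e, P f -> P e -> face f e ->
     forall x, Icell I e x -> beta e x = beta f x).

Definition rep_conj (I : set (Gam * A)) (P : E -> Prop) (beta beta' : E -> Gam -> G)
  : Prop :=
  exists g : G, forall e, P e -> forall x, Icell I e x ->
    beta' e x = tg_mul (tg_mul (tg_inv g) (beta e x)) g.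

(* elements of \bar{Rep}: families (b_e) of conjugacy classes, given by
   representatives b e, compatible under restriction to faces *)
Definition bar_rep (I : set (Gam * A)) (P : E -> Prop) (b : E -> Gam -> G)
  : Prop :=
  (forall e, P e -> cont_hom (Icell I e) (b e)) /\
  (forall f e, P f -> P e -> face f e -> hom_conj (Icell I e) (b f) (b e)).

Definition bar_eq (I : set (Gam * A)) (P : E -> Prop) (b b' : E -> Gam -> G)
  : Prop :=
  forall e, P e -> hom_conj (Icell I e) (b e) (b' e).

End CW.

Definition allcells {E : Type} : E -> Prop := fun _ => True.
Definition skel {E : Type} (dim : E -> nat) (k : nat) : E -> Prop :=
  fun e => (dim e <= k)%N.

(* A cellular representation is determined by its values at the vertices:
   local maximality makes the isotropy group of a cell a subgroup of that of
   each of its faces, and every cell has a vertex.  For (b),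
   a representation of the 1-skeleton is extended by giving each cell the
   value at a chosen vertex; this is compatible with faces because any two
   vertices of a cell are joined by a chain of edges of that cell.  The latter
   holds by induction on the dimension: the boundary of a cell of dimension at
   least 2 is a connected sphere covered by finitely many closed cells of
   lower dimension, which cannot split into two disjoint closed families. *)

From HB Require Import structures.
From mathcomp Require Import all_boot all_order all_algebra.
From mathcomp Require Import all_classical all_reals all_analysis.
From mathcomp Require Import Rstruct Rstruct_topology.
From mathcomp Require Import ring lra.

Set Implicit Arguments.
Unset Strict Implicit.
Unset Printing Implicit Defensive.

Import Order.TTheory GRing.Theory Num.Theory numFieldNormedType.Exports.
Local Open Scope classical_set_scope.
Local Open Scope ring_scope.

Lemma continuous_big_sum (R : realType) (T : topologicalType) (J : Type)
    (r : seq J) (f : J -> T -> R) :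
  (forall i, continuous (f i)) -> continuous (fun x => \sum_(i <- r) f i x).
Proof.
move=> fc; elim: r => [|a r IH] /=.
  under eq_fun do rewrite big_nil; exact: cst_continuous.
under eq_fun do rewrite big_cons.
by move=> x; apply: continuousD; [exact: fc|exact: IH].
Qed.

Lemma sqnorm_continuous n : continuous (@sqnorm n).
Proof.
by apply: continuous_big_sum => i x; apply: continuousM; exact: coord_continuous.
Qed.

Lemma sqnorm_ge0 n (x : 'rV[RR]_n) : 0 <= sqnorm x.
Proof. by apply: sumr_ge0 => i _; exact: sqr_ge0. Qed.

Lemma odisk0 n : odisk n 0.
Proof.
by rewrite /odisk /= /sqnorm big1 ?ltr01 // => i _; rewrite mxE expr0n.
Qed.

Lemma sqr_coord_le_sqnorm n (x : 'rV[RR]_n) i : x ord0 i ^+ 2 <= sqnorm x.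
Proof.
rewrite /sqnorm (bigD1 i) //= lerDl.
by apply: sumr_ge0 => j _; exact: sqr_ge0.
Qed.

Lemma sqnormZ n (t : RR) (x : 'rV[RR]_n) : sqnorm (t *: x) = t ^+ 2 * sqnorm x.
Proof.
by rewrite /sqnorm mulr_sumr; apply: eq_bigr => i _; rewrite mxE exprMn.
Qed.

Lemma disk_closed n : closed (disk n).
Proof.
apply: (@preimage_closed _ _ (@sqnorm n) [set x : RR | x <= 1]).
  by move=> x _; exact: sqnorm_continuous.
exact: closed_le.
Qed.

Lemma disk_compact n : compact (disk n).
Proof.
have cube_compact : compact [set v : 'rV[RR]_n | forall i, `[(-1 : RR), 1]%classic (v ord0 i)].
  by apply: (@rV_compact _ _ (fun=> `[(-1 : RR), 1]%classic)) => _; exact: segment_compact.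
apply: subclosed_compact (@disk_closed n) cube_compact _ => v dv i /=.
rewrite in_itv /= -ler_norml -(@ler_pXn2r _ 2) ?nnegrE ?normr_ge0 //.
by rewrite expr1n real_normK ?num_real // (le_trans (sqr_coord_le_sqnorm v i)).
Qed.

Lemma disk_sub_closure_odisk n : disk n `<=` closure (odisk n).
Proof.
move=> x dx; pose t k : RR := 1 - harmonic k / 2.
have t_cvg : t @ \oo --> (1 : RR).
  rewrite -[X in _ --> X]subr0 -(mul0r (2^-1 : RR)).
  exact: cvgB (cvg_cst _) (cvgMr_tmp (@cvg_harmonic RR)).
have tx_cvg : (fun k => t k *: x) @ \oo --> x.
  by have := @cvgZr_tmp _ _ _ _ _ t 1 x t_cvg; rewrite scale1r => h; exact: h.
apply: (closed_cvg _ (@closed_closure _ (odisk n)) _ x tx_cvg).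
apply: nearW => k; apply: subset_closure; rewrite /odisk /= sqnormZ.
have hk1 : harmonic k <= 1 :> RR by rewrite /harmonic /= invf_le1 ?ler1n ?ltr0n.
have hk0 : 0 < harmonic k :> RR := harmonic_gt0 k.
have t0 : 0 <= t k by rewrite /t; lra.
have t1 : t k < 1 by rewrite /t; lra.
apply: (le_lt_trans (ler_wpM2l (sqr_ge0 _) dx)); rewrite mulr1.
by move: t0 t1; set u := t k => t0 t1; rewrite expr2; nra.
Qed.

Definition dotr n (a b : 'rV[RR]_n) : RR := \sum_(i < n) a ord0 i * b ord0 i.

Lemma sqnorm_dotr n (a : 'rV[RR]_n) : sqnorm a = dotr a a.
Proof. by apply: eq_bigr => i _; rewrite expr2. Qed.

Lemma dotr_delta n (k : 'I_n) (q : 'rV[RR]_n) : dotr ('e_k) q = q ord0 k.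
Proof.
rewrite /dotr (bigD1 k) //= big1 ?addr0; first by rewrite mxE !eqxx mul1r.
by move=> j /negbTE jk; rewrite mxE jk andbF mul0r.
Qed.

Lemma sphere_delta n (k : 'I_n) : sphere n ('e_k).
Proof. by rewrite /sphere /= sqnorm_dotr dotr_delta mxE !eqxx. Qed.

Lemma sqnorm_segment n (a b : 'rV[RR]_n) (t : RR) :
  sqnorm ((1 - t) *: a + t *: b) =
  (1 - t) ^+ 2 * sqnorm a + t ^+ 2 * sqnorm b + 2 * t * (1 - t) * dotr a b.
Proof.
rewrite /sqnorm /dotr !mulr_sumr -!big_split /=; apply: eq_bigr => i _.
by rewrite !mxE; ring.
Qed.

Lemma dotr_sphere_le1 n (a b : 'rV[RR]_n) :
  sphere n a -> sphere n b -> dotr a b <= 1.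
Proof.
rewrite /sphere /= => sa sb; have := sqnorm_ge0 (a - b).
have -> : sqnorm (a - b) = sqnorm a + sqnorm b - 2 * dotr a b.
  rewrite /sqnorm /dotr mulr_sumr -big_split -sumrB /=; apply: eq_bigr => i _.
  by rewrite !mxE; ring.
by rewrite sa sb; lra.
Qed.

(* Radial projection of the segment [a, b] onto the sphere; the segment
   misses the origin unless b = -a. *)
Lemma sphere_arc n (a b : 'rV[RR]_n) : sphere n a -> sphere n b -> -1 < dotr a b ->
  exists S, [/\ connected S, S `<=` sphere n, S a & S b].
Proof.
move=> sa sb ab_gt; have ab_le := dotr_sphere_le1 sa sb.
move: sa sb; rewrite /sphere /= => sa sb.
pose y (t : RR) := (1 - t) *: a + t *: b.
pose s t := sqnorm (y t).
have s_gt0 t : 0 < s t.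
  have sE : s t = (1 + dotr a b) / 2 + (1 - dotr a b) * (1 - 2 * t) ^+ 2 / 2.
    by rewrite /s /y sqnorm_segment sa sb; field.
  have : 0 <= (1 - dotr a b) * (1 - 2 * t) ^+ 2.
    by apply: mulr_ge0; [rewrite subr_ge0|exact: sqr_ge0].
  by rewrite sE; move: ab_gt ab_le; set c := dotr a b; set q := (_ * _); lra.
pose g t := (Num.sqrt (s t))^-1 *: y t.
have g_sphere t : sqnorm (g t) = 1.
  rewrite /g sqnormZ -/(s t) exprVn sqr_sqrtr ?mulVf //; last exact: ltW.
  exact: lt0r_neq0.
have y0 : y 0 = a by rewrite /y subr0 scale1r scale0r addr0.
have y1 : y 1 = b by rewrite /y subrr scale0r scale1r add0r.
have y_cont : continuous y.
  move=> t; apply: (@continuousD _ _ _ (fun t : RR => (1 - t) *: a) (fun t : RR => t *: b)).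
    by apply: continuousZr_tmp; apply: continuousB; [exact: cst_continuous|exact: cvg_id].
  by apply: continuousZr_tmp; exact: cvg_id.
have g_cont : continuous g.
  move=> t; apply: (@continuousZ _ _ _ (fun t => (Num.sqrt (s t))^-1) y); last exact: y_cont.
  apply: continuousV; first by rewrite sqrtr_eq0 -ltNge s_gt0.
  apply: continuous_comp; last exact: sqrt_continuous.
  by apply: continuous_comp; [exact: y_cont|exact: sqnorm_continuous].
exists (g @` `[0, 1]%classic); split.
- apply: connected_continuous_connected; first exact: segment_connected.
  exact: continuous_subspaceT.
- by move=> _ [t _ <-]; exact: g_sphere.
- by exists 0; rewrite /g /s ?y0 ?sa ?sqrtr1 ?invr1 ?scale1r // /= in_itv /= lexx ler01.
- by exists 1; rewrite /g /s ?y1 ?sb ?sqrtr1 ?invr1 ?scale1r // /= in_itv /= lexx ler01.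
Qed.

(* Every point q of the sphere is joined by an arc to the first basis vector,
   except q = -e_0, which is joined to it through the second one. *)
Lemma sphere_connected n : (2 <= n)%N -> connected (sphere n).
Proof.
case: n => [|[|m]] // _.
pose k1 : 'I_m.+2 := @Ordinal m.+2 1 isT.
pose p : 'rV[RR]_m.+2 := 'e_ord0; pose r : 'rV[RR]_m.+2 := 'e_k1.
suff sub_comp : sphere m.+2 `<=` connected_component (sphere m.+2) p.
  have -> : sphere m.+2 = connected_component (sphere m.+2) p.
    by apply/seteqP; split => //; exact: connected_component_sub.
  exact: component_connected.
move=> q sq.
have [q0|q0] := ltrP (-1) (q ord0 ord0).
  have pq : -1 < dotr p q by rewrite dotr_delta.
  by have [S [? ? ? ?]] := sphere_arc (sphere_delta ord0) sq pq; exists S.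
have q1 : q ord0 k1 = 0.
  have : q ord0 ord0 ^+ 2 + q ord0 k1 ^+ 2 <= 1.
    rewrite -sq /sqnorm (bigD1 ord0) //= (bigD1 k1) //= addrA lerDl.
    by apply: sumr_ge0 => j _; exact: sqr_ge0.
  move: q0; set x := q ord0 ord0; set y := q ord0 k1 => q0 h.
  by apply/eqP; rewrite -sqrf_eq0 eq_le sqr_ge0 andbT; nra.
have pr : -1 < dotr p r by rewrite dotr_delta mxE eqxx ltrN10.
have rq : -1 < dotr r q by rewrite dotr_delta q1 ltrN10.
have [S1 [c1 s1 S1p S1r]] := sphere_arc (sphere_delta ord0) (sphere_delta k1) pr.
have [S2 [c2 s2 S2r S2q]] := sphere_arc (sphere_delta k1) sq rq.
exists (S1 `|` S2); last by right.
split; first by left.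
- by move=> x [] ?; [exact: s1|exact: s2].
- exact: connectedU (ex_intro _ r (conj S1r S2r)) c1 c2.
Qed.

Section TopGroupConj.
Variable Gm : topGroup.
Implicit Types x y z g h : Gm.
Local Notation "x * y" := (tg_mul x y).
Local Notation "x ^-1" := (tg_inv x).
Local Notation one := (@tg_one Gm).

Lemma tg_mulVr x : x * x^-1 = one.
Proof.
rewrite -[x * _]tg_mul1 -(tg_mulV (x^-1)) -tg_mulA [_ * (x * _)]tg_mulA.
by rewrite tg_mulV tg_mul1 tg_mulV.
Qed.

Lemma tg_mulr1 x : x * one = x.
Proof. by rewrite -(tg_mulV x) tg_mulA tg_mulVr tg_mul1. Qed.

Lemma tg_inv1 : one^-1 = one.
Proof. by rewrite -[one^-1]tg_mul1 tg_mulVr. Qed.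

Lemma tg_invK x : (x^-1)^-1 = x.
Proof. by rewrite -[(x^-1)^-1]tg_mulr1 -(tg_mulV x) tg_mulA tg_mulV tg_mul1. Qed.

Lemma tg_mulI x y z : x * y = x * z -> y = z.
Proof. by move/(congr1 (tg_mul x^-1)); rewrite !tg_mulA tg_mulV !tg_mul1. Qed.

Lemma tg_invM x y : (x * y)^-1 = y^-1 * x^-1.
Proof.
apply: (@tg_mulI (x * y)); rewrite tg_mulVr tg_mulA -[x * y * y^-1]tg_mulA.
by rewrite tg_mulVr tg_mulr1 tg_mulVr.
Qed.

Definition tg_conj g y := g^-1 * y * g.

Lemma tg_conj1 y : tg_conj one y = y.
Proof. by rewrite /tg_conj tg_inv1 tg_mul1 tg_mulr1. Qed.

Lemma tg_conjK g y : tg_conj g^-1 (tg_conj g y) = y.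
Proof.
by rewrite /tg_conj tg_invK !tg_mulA tg_mulVr tg_mul1 -tg_mulA tg_mulVr tg_mulr1.
Qed.

Lemma tg_conjM g h y : tg_conj h (tg_conj g y) = tg_conj (g * h) y.
Proof. by rewrite /tg_conj tg_invM !tg_mulA. Qed.

End TopGroupConj.

Section HomConj.
Variables (Gam G : topGroup).
Implicit Types (H K : set Gam) (phi psi chi : Gam -> G).

Lemma hom_conj_refl H phi : hom_conj H phi phi.
Proof. by exists tg_one => x _; rewrite -/(tg_conj _ _) tg_conj1. Qed.

Lemma hom_conj_sym H phi psi : hom_conj H phi psi -> hom_conj H psi phi.
Proof.
by move=> [g hg]; exists (tg_inv g) => x Hx; rewrite hg // -!/(tg_conj _ _) tg_conjK.
Qed.

Lemma hom_conj_trans H phi psi chi :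
  hom_conj H phi psi -> hom_conj H psi chi -> hom_conj H phi chi.
Proof.
move=> [g hg] [h hh]; exists (tg_mul g h) => x Hx.
by rewrite hh // hg // -!/(tg_conj _ _) tg_conjM.
Qed.

Lemma hom_conjS H K phi psi : K `<=` H -> hom_conj H phi psi -> hom_conj K phi psi.
Proof. by move=> KH [g hg]; exists g => x /KH; exact: hg. Qed.

Lemma cont_homS H K phi : K `<=` H -> cont_hom H phi -> cont_hom K phi.
Proof.
move=> KH [hm hc]; split; first by move=> x y /KH hx /KH hy; exact: hm.
exact: continuous_subspaceW hc.
Qed.

End HomConj.

Section RegularCW.
Variables (A : topologicalType) (E : Type) (dim : E -> nat).
Variable sig : forall e, 'rV[RR]_(dim e) -> A.
Arguments sig : clear implicits.
Hypothesis HR : is_regular_CW sig.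

Local Notation ocell := (ocell sig).
Local Notation ccell := (ccell sig).
Local Notation face := (face sig).

Definition cell_boundary e : set A := sig e @` sphere (dim e).
Definition boundary_cells e : set E := [set f | (cell_boundary e `&` ocell f) !=set0].
Definition vertex_of v e := dim v = 0%N /\ face v e.

Lemma ocell_cover a : exists e, ocell e a.
Proof. by case: HR => [[_ cover _ _ _] _ _ _]; have [e [? _]] := cover a; exists e. Qed.

Lemma ocell_uniq e f a : ocell e a -> ocell f a -> e = f.
Proof.
case: HR => [[_ cover _ _ _] _ _ _]; have [g [_ uniq_g]] := cover a.
by move=> /uniq_g -> /uniq_g ->.
Qed.

Lemma ocell_center e : ocell e (sig e 0).
Proof. by exists 0 => //; exact: odisk0. Qed.

Lemma face_refl e : face e e.
Proof. exact: subset_closure. Qed.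

Arguments ocell_center : clear implicits.
Arguments face_refl : clear implicits.

Lemma face_trans f g e : face f g -> face g e -> face f e.
Proof.
move=> fg ge x /fg; rewrite (closure_id (closure (ocell e))).1; last exact: closed_closure.
exact: closureS.
Qed.

Lemma ccell_closed e : closed (ccell e).
Proof.
case: HR => [[hausA _ [sig_cont _ _] _ _] _ _ _].
by apply: compact_closed => //; apply: continuous_compact (sig_cont e) _; exact: disk_compact.
Qed.

Lemma closure_ocell_sub_ccell e : closure (ocell e) `<=` ccell e.
Proof.
rewrite [X in _ `<=` X](closure_id (ccell e)).1; last exact: ccell_closed.
by apply: closureS => _ [x ox <-]; exists x => //; apply: ltW.
Qed.

(* Uses the weak topology: the preimage of closure (ocell e) is closed and
   contains the open disk, hence the closed disk. *)
Lemma ccell_sub_closure_ocell e : ccell e `<=` closure (ocell e).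
Proof.
case: HR => [[_ _ _ _ weak] _ _ _].
have := (weak (closure (ocell e))).1 (@closed_closure _ _) e.
set D := _ `&` _ => closed_D.
have odisk_D : odisk (dim e) `<=` D.
  by move=> x ox; split; [exact: ltW|apply: subset_closure; exists x].
have := closureS odisk_D; rewrite -(closure_id D).1 // => clD.
by move=> _ [x dx <-]; have [] := clD _ (disk_sub_closure_odisk dx).
Qed.

Lemma ccell_ocellU_boundary e a : ccell e a -> ocell e a \/ cell_boundary e a.
Proof.
move=> [x + <-]; rewrite /disk /= le_eqVlt => /orP[/eqP x1|x1].
  by right; exists x.
by left; exists x.
Qed.

Lemma boundary_sub_closure_ocell e : cell_boundary e `<=` closure (ocell e).
Proof.
by move=> _ [x sx <-]; apply: ccell_sub_closure_ocell; exists x => //; rewrite /disk /= sx.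
Qed.

Lemma boundary_dim_lt e f a : cell_boundary e a -> ocell f a -> (dim f < dim e)%N.
Proof.
case: HR => [[_ _ _ [bdry _] _] _ _ _] [x sx <-] of'.
by have [g [dg og]] := bdry e x sx; rewrite -(ocell_uniq og of').
Qed.

Lemma boundary_cells_sub e f : boundary_cells e f -> ocell f `<=` cell_boundary e.
Proof.
move=> [p [bp op]]; case: HR => _ _ _ /(_ e) [_ [F FE]].
move: bp; rewrite /cell_boundary FE => -[g Fg og].
by rewrite -(ocell_uniq og op) => q oq; exists g.
Qed.

Lemma face_of_closure_meet f e a : ocell f a -> closure (ocell e) a -> face f e.
Proof.
move=> of' /closure_ocell_sub_ccell /ccell_ocellU_boundary [oe|be].
  by rewrite (ocell_uniq of' oe); exact: face_refl.
have Ff : boundary_cells e f by exists a.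
by move=> q /(boundary_cells_sub Ff) /boundary_sub_closure_ocell.
Qed.

Lemma face_eq_or_dim_lt f e : face f e -> f = e \/ (dim f < dim e)%N.
Proof.
move=> /(_ _ (ocell_center f)) /closure_ocell_sub_ccell /ccell_ocellU_boundary.
case=> [oe|be]; first by left; exact: ocell_uniq (ocell_center f) oe.
by right; exact: boundary_dim_lt be (ocell_center f).
Qed.

Lemma boundary_cells_dim e f : boundary_cells e f -> (dim f < dim e)%N.
Proof. by move=> [p [bp op]]; exact: boundary_dim_lt bp op. Qed.

Lemma boundary_cells_face e f : boundary_cells e f -> face f e.
Proof. by move=> [p [bp op]]; exact: face_of_closure_meet op (boundary_sub_closure_ocell bp). Qed.

Lemma boundary_cells_finite e : finite_set (boundary_cells e).
Proof. by case: HR => [[_ _ _ [_ fin] _] _ _ _]; exact: fin. Qed.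
Arguments boundary_cells_finite : clear implicits.

Lemma boundary_connected e : (2 <= dim e)%N -> connected (cell_boundary e).
Proof.
case: HR => [[_ _ [sig_cont _ _] _ _] _ _ _] d2.
apply: connected_continuous_connected; first exact: sphere_connected.
by apply: continuous_subspaceW (sig_cont e) => x sx; rewrite /disk /= sx.
Qed.

Lemma exists_vertex e : exists v, vertex_of v e.
Proof.
have [n] := ubnP (dim e); elim: n e => // n IH e.
have [d0 _|dpos /ltnSE den] := posnP (dim e).
  by exists e; split => //; exact: face_refl.
have [f of'] := ocell_cover (sig e 'e_(Ordinal dpos)).
have Ff : boundary_cells e f.
  by exists (sig e 'e_(Ordinal dpos)); split => //; exists 'e_(Ordinal dpos); first exact: sphere_delta.
have [v [dv fv]] := IH f (leq_trans (boundary_cells_dim Ff) den).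
by exists v; split => //; exact: face_trans fv (boundary_cells_face Ff).
Qed.
Arguments exists_vertex : clear implicits.

Lemma vertex_in_boundary v e :
  vertex_of v e -> (1 <= dim e)%N -> cell_boundary e (sig v 0).
Proof.
move=> [dv fve] de; move: (fve _ (ocell_center v)).
move=> /closure_ocell_sub_ccell /ccell_ocellU_boundary [oe|//].
by rewrite -(ocell_uniq (ocell_center v) oe) dv in de.
Qed.

Section VerticesLinked.
Variable R : E -> E -> Prop.
Hypotheses (R_refl : forall v, R v v) (R_sym : forall v w, R v w -> R w v)
           (R_trans : forall u v w, R u v -> R v w -> R u w).

Definition links e := forall v w, vertex_of v e -> vertex_of w e -> R v w.

(* The boundary sphere is connected and covered by the finitely many closed
   boundary cells; those whose vertices are linked to v0 and those whose are
   not form two disjoint closed sets, so one of them is empty. *)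
Lemma links_of_boundary e :
  (2 <= dim e)%N -> (forall f, boundary_cells e f -> links f) -> links e.
Proof.
move=> d2 linksF v0 w [dv0 fv0] [dw fw].
have d1 : (1 <= dim e)%N by apply: ltnW.
pose P (b : bool) f := exists u, vertex_of u f /\ (R v0 u <-> b).
pose K b := \bigcup_(f in boundary_cells e `&` P b) closure (ocell f).
have K_closed b : closed (K b).
  apply: (@closed_bigcup _ {classic E}); last by move=> i _; exact: closed_closure.
  by apply: sub_finite_set (boundary_cells_finite e); apply: subIsetl.
have sep : separated (K false) (K true).
  rewrite /separated -!(closure_id _).1 //.
  suff -> : K false `&` K true = set0 by split => //; rewrite setIC.
  apply/seteqP; split => // p [[f1 [F1 [u1 [u1f1 Pu1]]] c1] [f2 [F2 [u2 [u2f2 Pu2]]] c2]].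
  have [f' of'] := ocell_cover p.
  have [u [du fu]] := exists_vertex f'.
  have u1u : R u1 u.
    by apply: linksF F1 _ _ u1f1 (conj du (face_trans fu (face_of_closure_meet of' c1))).
  have u2u : R u2 u.
    by apply: linksF F2 _ _ u2f2 (conj du (face_trans fu (face_of_closure_meet of' c2))).
  have : R v0 u1 := R_trans (proj2 Pu2 erefl) (R_trans u2u (R_sym u1u)).
  by move/Pu1.
have cov : cell_boundary e `<=` K false `|` K true.
  move=> p bp; have [f of'] := ocell_cover p.
  have Ff : boundary_cells e f by exists p.
  have [u uf] := exists_vertex f.
  have [r|nr] := pselect (R v0 u).
    by right; exists f; [split=> //; exists u; split|exact: subset_closure].
  by left; exists f; [split=> //; exists u; split|exact: subset_closure].
have v0_bdry := vertex_in_boundary (conj dv0 fv0) d1.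
have w_bdry := vertex_in_boundary (conj dw fw) d1.
have [sub|sub] := connected_subset sep cov (boundary_connected d2).
  have [f [Ff [u [uf Pu]]] cf] := sub _ v0_bdry.
  have : R u v0 := linksF _ Ff _ _ uf (conj dv0 (face_of_closure_meet (ocell_center v0) cf)).
  by move/R_sym/Pu.
have [f [Ff [u [uf Pu]]] cf] := sub _ w_bdry.
have : R u w := linksF _ Ff _ _ uf (conj dw (face_of_closure_meet (ocell_center w) cf)).
by apply: R_trans; apply/Pu.
Qed.

Lemma links_of_edges e : (forall d, dim d = 1%N -> face d e -> links d) -> links e.
Proof.
have [n] := ubnP (dim e); elim: n e => // n IH e /ltnSE den edges.
case: (ltngtP (dim e) 1) => [de0|de2|de1].
- have dim0 : dim e = 0%N by case: (dim e) de0.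
  move=> v w [dv fv] [dw fw].
  have [vE|] := face_eq_or_dim_lt fv; last by rewrite dim0 dv.
  have [wE|] := face_eq_or_dim_lt fw; last by rewrite dim0 dw.
  by rewrite vE wE.
- apply: links_of_boundary de2 _ => f Ff; apply: IH.
    exact: leq_trans (boundary_cells_dim Ff) den.
  by move=> d d1 fdf; apply: edges d1 (face_trans fdf (boundary_cells_face Ff)).
- exact: edges e de1 (face_refl e).
Qed.

End VerticesLinked.
End RegularCW.

(* Local maximality at the centre of a face f of e yields a contraction of a
   neighbourhood meeting the open cell e onto that centre, along which the
   isotropy groups can only grow. *)
Lemma Icell_face (A : topologicalType) (E : Type) (dim : E -> nat)
    (sig : forall e, 'rV[RR]_(dim e) -> A) (Gam : topGroup) (I : set (Gam * A)) f e :
  cellular_groupoid sig I -> face sig f e -> Icell sig I e `<=` Icell sig I f.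
Proof.
case=> _ I_cell I_locmax fe x [a [oa Ixa]].
have [U [oU Uf _ [rho [_ _ _ rho1 rho_mono]]]] := I_locmax (sig f 0) setT filterT.
have [u [ou Uu]] := fe _ (ocell_center sig f) U (open_nbhs_nbhs (conj oU Uf)).
exists (sig f 0); split; first exact: ocell_center.
have Iux : fiber I u x by rewrite -(I_cell e a u oa ou).
by rewrite -(rho1 u Uu); apply: (rho_mono 1 u _ Uu x Iux); rewrite ler01 lexx.
Qed.

Lemma rep_conjS (A : topologicalType) (E : Type) (dim : E -> nat)
    (sig : forall e, 'rV[RR]_(dim e) -> A) (Gam G : topGroup) (I : set (Gam * A))
    (P Q : E -> Prop) (beta beta' : E -> Gam -> G) :
  (forall e, Q e -> P e) -> rep_conj sig I P beta beta' -> rep_conj sig I Q beta beta'.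
Proof. by move=> QP [g hg]; exists g => e /QP; exact: hg. Qed.

Lemma bar_eqS (A : topologicalType) (E : Type) (dim : E -> nat)
    (sig : forall e, 'rV[RR]_(dim e) -> A) (Gam G : topGroup) (I : set (Gam * A))
    (P Q : E -> Prop) (b b' : E -> Gam -> G) :
  (forall e, Q e -> P e) -> bar_eq sig I P b b' -> bar_eq sig I Q b b'.
Proof. by move=> QP hb e /QP; exact: hb. Qed.

Section Representations.
Variables (A : topologicalType) (E : Type) (dim : E -> nat).
Variable sig : forall e, 'rV[RR]_(dim e) -> A.
Arguments sig : clear implicits.
Hypothesis HR : is_regular_CW sig.
Variables (Gam G : topGroup) (I : set (Gam * A)).
Hypothesis HI : cellular_groupoid sig I.

Local Notation face := (face sig).
Local Notation Ic := (Icell sig I).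

Definition cell_vertex e : E := projT1 (cid (exists_vertex HR e)).

Lemma cell_vertexP e : vertex_of sig (cell_vertex e) e.
Proof. exact: projT2 (cid (exists_vertex HR e)). Qed.

Lemma skel_cell_vertex k e : skel dim k (cell_vertex e).
Proof. by rewrite /skel (proj1 (cell_vertexP e)). Qed.

Lemma Icell_cell_vertex e : Ic e `<=` Ic (cell_vertex e).
Proof. exact: Icell_face HI (proj2 (cell_vertexP e)). Qed.

Lemma rep_conj_of_vertices (beta beta' : E -> Gam -> G) :
  cell_rep sig I allcells beta -> cell_rep sig I allcells beta' ->
  rep_conj sig I (skel dim 0) beta beta' -> rep_conj sig I allcells beta beta'.
Proof.
move=> [_ compat] [_ compat'] [g hg]; exists g => e _ x Iex.
have ve := proj2 (cell_vertexP e).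
rewrite (compat' _ _ Logic.I Logic.I ve x Iex) (compat _ _ Logic.I Logic.I ve x Iex).
exact: hg (skel_cell_vertex 0 e) x (Icell_cell_vertex Iex).
Qed.

Lemma bar_eq_of_vertices (b b' : E -> Gam -> G) :
  bar_rep sig I allcells b -> bar_rep sig I allcells b' ->
  bar_eq sig I (skel dim 0) b b' -> bar_eq sig I allcells b b'.
Proof.
move=> [_ compat] [_ compat'] hb e _.
have ve := proj2 (cell_vertexP e).
apply: hom_conj_trans (compat' _ _ Logic.I Logic.I ve).
apply: hom_conj_trans (hom_conj_sym (compat _ _ Logic.I Logic.I ve)) _.
exact: hom_conjS (@Icell_cell_vertex e) (hb _ (skel_cell_vertex 0 e)).
Qed.

Section VertexExtension.
Variable rel : set Gam -> (Gam -> G) -> (Gam -> G) -> Prop.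
Hypotheses (rel_refl : forall H phi, rel H phi phi)
  (rel_sym : forall H phi psi, rel H phi psi -> rel H psi phi)
  (rel_trans : forall H phi psi chi, rel H phi psi -> rel H psi chi -> rel H phi chi)
  (relS : forall H K phi psi, K `<=` H -> rel H phi psi -> rel K phi psi).
Variable c : E -> Gam -> G.
Hypothesis c_compat : forall f e, skel dim 1 f -> skel dim 1 e -> face f e ->
  rel (Ic e) (c f) (c e).

Lemma rel_cell_vertex f e : face f e -> rel (Ic e) (c (cell_vertex f)) (c (cell_vertex e)).
Proof.
move=> fe; have [dvf vf] := cell_vertexP f.
apply: (links_of_edges HR (R := fun v w => rel (Ic e) (c v) (c w))).
- by move=> v; exact: rel_refl.
- by move=> v w; exact: rel_sym.
- by move=> u v w; exact: rel_trans.
- move=> d d1 de v w [dv vd] [dw wd]; apply: relS (Icell_face HI de) _.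
  have skel1 u : dim u = 0%N -> skel dim 1 u by rewrite /skel => ->.
  have skel_d : skel dim 1 d by rewrite /skel d1.
  exact: rel_trans (c_compat (skel1 v dv) skel_d vd) (rel_sym (c_compat (skel1 w dw) skel_d wd)).
- by split => //; exact: face_trans vf fe.
- exact: cell_vertexP.
Qed.

End VertexExtension.

Definition vertex_extension (c : E -> Gam -> G) e := c (cell_vertex e).

Lemma cell_rep_vertex_extension (gam : E -> Gam -> G) : cell_rep sig I (skel dim 1) gam ->
  cell_rep sig I allcells (vertex_extension gam) /\
  rep_conj sig I (skel dim 1) (vertex_extension gam) gam.
Proof.
move=> [gam_hom gam_compat]; split; last first.
  exists tg_one => e e1 x Iex; rewrite -/(tg_conj _ _) tg_conj1.
  exact: gam_compat (skel_cell_vertex 1 e) e1 (proj2 (cell_vertexP e)) x Iex.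
split=> [e _|f e _ _ fe x Iex].
  exact: cont_homS (@Icell_cell_vertex e) (gam_hom _ (skel_cell_vertex 1 e)).
pose rel H (phi psi : Gam -> G) := forall y, H y -> psi y = phi y.
apply: (@rel_cell_vertex rel) fe x Iex => //.
- by move=> H phi psi h y Hy; rewrite h.
- by move=> H phi psi chi h1 h2 y Hy; rewrite h2 // h1.
- by move=> H K phi psi KH h y /KH; exact: h.
Qed.

Lemma bar_rep_vertex_extension (c : E -> Gam -> G) : bar_rep sig I (skel dim 1) c ->
  bar_rep sig I allcells (vertex_extension c) /\
  bar_eq sig I (skel dim 1) (vertex_extension c) c.
Proof.
move=> [c_hom c_compat]; split; last first.
  by move=> e e1; exact: c_compat (skel_cell_vertex 1 e) e1 (proj2 (cell_vertexP e)).
split=> [e _|f e _ _ fe].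
  exact: cont_homS (@Icell_cell_vertex e) (c_hom _ (skel_cell_vertex 1 e)).
apply: (@rel_cell_vertex (@hom_conj Gam G)) fe => //.
- exact: hom_conj_refl.
- exact: hom_conj_sym.
- exact: hom_conj_trans.
- exact: hom_conjS.
Qed.

End Representations.

Unset Implicit Arguments.

Theorem proposition5p2 (Gam : topGroup) (A : topologicalType) (E : Type)
  (dim : E -> nat) (sig : forall e, 'rV[RR]_(dim e) -> A)
  (I : set (Gam * A)) (G : topGroup) :
  is_regular_CW sig -> cellular_groupoid sig I ->
  ((forall beta beta' : E -> Gam -> G,
      cell_rep sig I allcells beta -> cell_rep sig I allcells beta' ->
      rep_conj sig I (skel dim 0) beta beta' -> rep_conj sig I allcells beta beta') /\
   (forall b b' : E -> Gam -> G,
      bar_rep sig I allcells b -> bar_rep sig I allcells b' ->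
      bar_eq sig I (skel dim 0) b b' -> bar_eq sig I allcells b b')) /\
  ((forall beta beta' : E -> Gam -> G,
      cell_rep sig I allcells beta -> cell_rep sig I allcells beta' ->
      rep_conj sig I (skel dim 1) beta beta' -> rep_conj sig I allcells beta beta') /\
   (forall gam : E -> Gam -> G, cell_rep sig I (skel dim 1) gam ->
      exists beta : E -> Gam -> G,
        cell_rep sig I allcells beta /\ rep_conj sig I (skel dim 1) beta gam) /\
   (forall b b' : E -> Gam -> G,
      bar_rep sig I allcells b -> bar_rep sig I allcells b' ->
      bar_eq sig I (skel dim 1) b b' -> bar_eq sig I allcells b b') /\
   (forall c : E -> Gam -> G, bar_rep sig I (skel dim 1) c ->
      exists b : E -> Gam -> G,
        bar_rep sig I allcells b /\ bar_eq sig I (skel dim 1) b c)).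
Proof.
move=> HR HI.
have skel01 e : skel dim 0 e -> skel dim 1 e by move=> /leq_trans; apply.
split; first by split; [exact: rep_conj_of_vertices | exact: bar_eq_of_vertices].
split.
  move=> beta beta' rep rep' /(rep_conjS skel01).
  exact: rep_conj_of_vertices.
split.
  by move=> gam /(cell_rep_vertex_extension HR HI) ext; exists (vertex_extension HR gam).
split.
  move=> b b' rep rep' /(bar_eqS skel01).
  exact: bar_eq_of_vertices.
by move=> c /(bar_rep_vertex_extension HR HI) ext; exists (vertex_extension HR c).
Qed.
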